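(* Let $L$ be a finite lattice and $\Theta$ a lattice congruence on $L$ such that no atom of $L$ is congruent to $\hat0$ and no coatom of $L$ is congruent to $\hat1$. Then the proper part of $L$ is homotopy equivalent to the proper part of $L/\Theta$.
   Context: A lattice congruence is an equivalence relation respecting joins and meets; $L/\Theta$ is the quotient lattice of classes ($[a]\le[b]$ iff some $x\in[a]$, $y\in[b]$ have $x\le y$). $\hat0,\hat1$ are the minimum and maximum; atoms cover $\hat0$, coatoms are covered by $\hat1$. The proper part of a finite lattice is the poset obtained by removing $\hat0$ and $\hat1$; topological statements about a poset refer to its order complex (the simplicial complex of its chains). *)

From HB Require Import structures.
From mathcomp Require Import all_boot all_order all_algebra.
From mathcomp Require Import all_classical all_reals topology normedtype.
Import numFieldNormedType.Exports.
Set Implicit Arguments.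
Unset Strict Implicit.
Unset Printing Implicit Defensive.
Import Order.Theory GRing.Theory Num.Theory.
Local Open Scope classical_set_scope.
Local Open Scope ring_scope.
Local Open Scope order_scope.

Definition lattice_congruence (disp : Order.disp_t) (L : latticeType disp)
  (Th : rel L) : Prop :=
  [/\ equivalence_rel Th,
      (forall x y z, Th x y -> Th (x `|` z) (y `|` z) /\ Th (z `|` x) (z `|` y)) &
      (forall x y z, Th x y -> Th (x `&` z) (y `&` z) /\ Th (z `&` x) (z `&` y))].

Definition cong_class (disp : Order.disp_t) (L : finLatticeType disp)
  (Th : rel L) (x : L) : {set L} := [set y | Th x y].

(* Elements of the quotient L/Th are the congruence classes. *)
Definition is_cong_class (disp : Order.disp_t) (L : finLatticeType disp)
  (Th : rel L) (S : {set L}) : bool := [exists x, S == cong_class Th x].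

Definition quot_le (disp : Order.disp_t) (L : finLatticeType disp)
  (S T : {set L}) : bool := [exists x in S, exists y in T, x <= y].

Definition is_atom (disp : Order.disp_t) (L : tbLatticeType disp) (a : L) : Prop :=
  \bot < a /\ forall z : L, \bot < z -> z <= a -> z = a.
Definition is_coatom (disp : Order.disp_t) (L : tbLatticeType disp) (a : L) : Prop :=
  a < \top /\ forall z : L, a <= z -> z < \top -> z = a.

(* For a finite set of vertices V, a predicate P selecting the elements of the
   poset, and its order relation le, the geometric realization of the order
   complex (simplicial complex of chains of P) is the set of points x of the
   standard simplex in R^V whose support is a chain of P. *)
Definition order_complex_realization (R : realType) (V : finType)
  (P : pred V) (le : rel V) : set {ptws V -> R} :=
  [set x | [/\ (forall v, (0 <= x v)%R),
              (\sum_(v : V) x v = 1)%R,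
              (forall v, x v != 0%R -> P v) &
              (forall u v, x u != 0%R -> x v != 0%R -> le u v || le v u)]].

Definition unit_interval (R : realType) : set R := [set t : R | (0 <= t <= 1)%R].

Definition homotopic (R : realType) (X Y : topologicalType) (f g : X -> Y) : Prop :=
  exists H : (set_type (@unit_interval R) * X)%type -> Y,
    [/\ continuous H,
        (forall t x, set_val t = 0%R -> H (t, x) = f x) &
        (forall t x, set_val t = 1%R -> H (t, x) = g x)].

Definition homotopy_equivalent (R : realType) (X Y : topologicalType) : Prop :=
  exists (f : X -> Y) (g : Y -> X),
    [/\ continuous f, continuous g,
        homotopic R (g \o f) idfun & homotopic R (f \o g) idfun].

Definition proper_part_space (R : realType) (disp : Order.disp_t)
  (L : finTBLatticeType disp) : topologicalType :=
  set_type (@order_complex_realization R _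
              (fun x : L => (x != \bot) && (x != \top)) (fun x y : L => x <= y)).

Definition quotient_proper_part_space (R : realType) (disp : Order.disp_t)
  (L : finTBLatticeType disp) (Th : rel L) : topologicalType :=
  set_type (@order_complex_realization R _
     (fun S : {set L} => [&& is_cong_class Th S, S != cong_class Th \bot
                          & S != cong_class Th \top])
     (fun S T : {set L} => quot_le S T)).

From HB Require Import structures.
From mathcomp Require Import all_boot all_order all_algebra.
From mathcomp Require Import all_classical all_reals topology normedtype.
From mathcomp Require Import lra.
Import numFieldNormedType.Exports.
Import Order.Theory GRing.Theory Num.Theory.
Set Implicit Arguments.
Unset Strict Implicit.
Local Open Scope ring_scope.
Local Open Scope order_scope.

(* Congruence classes are closed under meets, so each class [x] has a least
   element min[x] <= x.  The hypotheses on atoms and coatoms force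
   [x] = [\bot] only for x = \bot and [x] = [\top] only for x = \top, so
   x |-> [x] and [x] |-> min[x] are order maps between the proper parts; on
   geometric realizations they act by pushing barycentric weights forward.
   The composite on the quotient is the identity, and the composite on L is
   induced by x |-> min[x].  Two order maps f <= g induce homotopic maps:
   transport the weight of a chain from g to f starting at its bottom, so that
   at every time the part already moved lies below the part not yet moved and
   the support of the image is still a chain. *)

Section Atoms.
Variables (disp : Order.disp_t) (L : finTBLatticeType disp).

Lemma exists_atom_le (x : L) : \bot < x -> exists2 a : L, is_atom a & a <= x.
Proof.
(* an element of ]\bot, x] with the fewest elements below it is an atom *)
move=> x_gt0; pose below (z : L) := #|[set w : L | w < z]|.
have Px : (\bot < x) && (x <= x) by rewrite x_gt0 lexx.
have [a /andP[a_gt0 a_le_x] a_min] := @arg_minnP _ x (fun z => (\bot < z) && (z <= x)) below Px.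
exists a => //; split=> // z z_gt0 z_le_a; apply/eqP; apply: contraT => z_ne_a.
have z_lt_a : z < a by rewrite lt_neqAle z_ne_a.
have : (below z < below a)%N.
  apply: proper_card; apply/properP; split; last by exists z; rewrite !inE ?ltxx.
  by apply/fintype.subsetP => w; rewrite !inE => /lt_trans; apply.
by rewrite ltnNge a_min // z_gt0 (le_trans z_le_a).
Qed.
End Atoms.

Lemma exists_coatom_ge (disp : Order.disp_t) (L : finTBLatticeType disp) (x : L) :
  x < \top -> exists2 a : L, is_coatom a & x <= a.
Proof.
move=> x_lt1; have [a [a_lt1 a_max] x_le_a] := @exists_atom_le _ L^d x x_lt1.
by exists a => //; split=> // z a_le_z z_lt1; apply: a_max.
Qed.

Section LatticeCongruence.
Variables (disp : Order.disp_t) (L : finTBLatticeType disp) (Th : rel L).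
Hypothesis ThC : lattice_congruence Th.

Lemma cong_refl : reflexive Th.
Proof. by case: ThC => /equivalence_relP[]. Qed.

Lemma cong_ltrans : left_transitive Th.
Proof. by case: ThC => /equivalence_relP[]. Qed.

Lemma cong_sym : symmetric Th.
Proof.
by move=> x y; apply/idP/idP => Txy; rewrite -(cong_ltrans Txy) cong_refl.
Qed.

Lemma cong_trans : transitive Th.
Proof. by move=> y x z Txy; rewrite (cong_ltrans Txy). Qed.

Lemma cong_meetl x y z : Th x y -> Th (x `&` z) (y `&` z).
Proof. by move=> Txy; case: ThC => _ _ /(_ x y z Txy)[]. Qed.

Lemma cong_meetr x y z : Th x y -> Th (z `&` x) (z `&` y).
Proof. by move=> Txy; case: ThC => _ _ /(_ x y z Txy)[]. Qed.

Lemma cong_joinl x y z : Th x y -> Th (x `|` z) (y `|` z).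
Proof. by move=> Txy; case: ThC => _ /(_ x y z Txy)[]. Qed.

Lemma cong_meet x y z : Th x y -> Th x z -> Th x (y `&` z).
Proof.
move=> Txy Txz; have Tx : Th x (x `&` z) by rewrite -{1}[x]meetxx cong_meetr.
exact: cong_trans Tx (cong_meetl z Txy).
Qed.

Lemma cong_classP x y : reflect (cong_class Th x = cong_class Th y) (Th x y).
Proof.
apply: (iffP idP) => [Txy | eq_xy].
  by apply/setP => z; rewrite !inE (cong_ltrans Txy).
have : y \in cong_class Th y by rewrite inE cong_refl.
by rewrite -eq_xy inE.
Qed.

Definition cong_min x := \meet_(y in cong_class Th x) y.

Lemma cong_min_le x : cong_min x <= x.
Proof. by apply: meets_inf; rewrite inE cong_refl. Qed.

Lemma cong_min_minimal x y : Th x y -> cong_min x <= y.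
Proof. by move=> Txy; apply: meets_inf; rewrite inE. Qed.

Lemma cong_cong_min x : Th x (cong_min x).
Proof.
suff : Th x (x `&` cong_min x) by rewrite (meet_idPr (cong_min_le x)).
rewrite /cong_min; elim/big_rec: _ => [|y m]; first by rewrite meetx1 cong_refl.
by rewrite inE => Txy Txm; rewrite meetCA cong_meet.
Qed.

Lemma cong_min_homo : {homo cong_min : x y / x <= y}.
Proof.
move=> x y le_xy; have Tx : Th x (x `&` cong_min y).
  by rewrite -{1}(meet_idPl le_xy) cong_meetr // cong_cong_min.
exact: le_trans (cong_min_minimal Tx) (leIr _ _).
Qed.

Hypothesis atom_not_cong_bot : forall a : L, is_atom a -> ~ Th a \bot.
Hypothesis coatom_not_cong_top : forall a : L, is_coatom a -> ~ Th a \top.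

Lemma cong_bot x : Th x \bot -> x = \bot.
Proof.
move=> Tx0; apply/eqP; apply: contraT; rewrite -lt0x => /exists_atom_le[a a_atom a_le_x].
by case: (atom_not_cong_bot a_atom); rewrite -(meet_idPr a_le_x) -[\bot](meet0x a) cong_meetl.
Qed.

Lemma cong_top x : Th x \top -> x = \top.
Proof.
move=> Tx1; apply/eqP; apply: contraT; rewrite -ltx1 => /exists_coatom_ge[a a_coatom x_le_a].
by case: (coatom_not_cong_top a_coatom); rewrite -(join_idPr x_le_a) -[\top](join1x a) cong_joinl.
Qed.

Lemma cong_class_eq_bot x : (cong_class Th x == cong_class Th \bot) = (x == \bot).
Proof. by apply/eqP/eqP => [/cong_classP/cong_bot | ->]. Qed.

Lemma cong_class_eq_top x : (cong_class Th x == cong_class Th \top) = (x == \top).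
Proof. by apply/eqP/eqP => [/cong_classP/cong_top | ->]. Qed.

Lemma cong_min_eq_bot x : (cong_min x == \bot) = (x == \bot).
Proof.
apply/eqP/eqP => [min0 | ->]; first by apply: cong_bot; rewrite -min0 cong_cong_min.
by apply/eqP; rewrite -lex0 cong_min_le.
Qed.

Lemma cong_min_eq_top x : (cong_min x == \top) = (x == \top).
Proof.
apply/eqP/eqP => [min1 | ->]; first by apply/eqP; rewrite -le1x -min1 cong_min_le.
by apply/cong_top; rewrite cong_sym cong_cong_min.
Qed.

End LatticeCongruence.

Section PointwiseContinuity.
Local Open Scope classical_set_scope.
Variables (T : topologicalType) (V : eqType) (Y : topologicalType).

Lemma continuous_ptws (F : T -> {ptws V -> Y}) :
  (forall v, continuous (fun t => F t v)) -> continuous F.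
Proof.
move=> F_cont t; apply/cvg_sup => v.
have eval_surj : (fun f : V -> Y => f v) @` setT = setT.
  by rewrite eqEsubset; split => // y _; exists (fun=> y).
apply/cvg_image => // U U_nbhs.
exists ((fun f : V -> Y => f v) @^-1` U); last exact: image_preimage.
exact: F_cont.
Qed.

Lemma continuous_ptws_subspace (A : set {ptws V -> Y}) (F : T -> set_type A) :
  (forall v, continuous (fun t => set_val (F t) v)) -> continuous F.
Proof.
move=> F_cont; apply: (@continuous_comp_initial _ _ _ (@set_val _ A)).
exact: continuous_ptws.
Qed.

Lemma continuous_ptws_subspace_coord (A : set {ptws V -> Y}) (v : V) :
  continuous (fun a : set_type A => set_val a v).
Proof.
move=> a; apply: (@continuous_comp _ _ _ (@set_val _ A) (fun f : {ptws V -> Y} => f v)).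
  exact: initial_continuous.
exact: proj_continuous.
Qed.

End PointwiseContinuity.

Lemma continuous_sumr (R : realType) (T : topologicalType) (I : Type) (r : seq I)
    (P : pred I) (F : I -> T -> R) :
  (forall i, continuous (F i)) -> continuous (fun t => \sum_(i <- r | P i) F i t).
Proof. by move=> F_cont; apply: continuous_big => [|i _]; [exact: add_continuous | exact: F_cont]. Qed.

Local Notation realization R P le := (@order_complex_realization R _ P le).

Section Pushforward.
Variable R : realType.
Implicit Types (U V W : finType).

Definition pushforward V W (h : V -> W) (x : V -> R) : W -> R :=
  fun w => \sum_(v | h v == w) x v.

Lemma pushforward_neq0 V W (h : V -> W) x w :
  pushforward h x w != 0 -> exists2 v, h v = w & x v != 0.
Proof.
move=> hx; have [v /andP[/eqP <- xv]|none] := pickP (fun v => (h v == w) && (x v != 0)).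
  by exists v.
move: hx; rewrite /pushforward big1 ?eqxx // => v hv.
by move: (none v); rewrite hv => /negbFE/eqP.
Qed.

Lemma sum_pushforward V W (h : V -> W) x : \sum_w pushforward h x w = \sum_v x v.
Proof. by rewrite [RHS](partition_big h predT). Qed.

Lemma pushforward_comp U V W (h1 : U -> V) (h2 : V -> W) x :
  pushforward h2 (pushforward h1 x) = pushforward (h2 \o h1) x.
Proof.
apply/funext => w; rewrite /pushforward [RHS](partition_big h1 (fun v => h2 v == w)) //=.
apply: eq_bigr => v /eqP h2v; apply: eq_bigl => u.
by case: (eqVneq (h1 u) v) => [->|]; rewrite ?h2v ?eqxx ?andbF.
Qed.

Lemma pushforward_id_on V (h : V -> V) x :
  (forall v, x v != 0 -> h v = v) -> pushforward h x = x.
Proof.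
move=> h_id; apply/funext => w.
rewrite /pushforward big_mkcond (eq_bigr (fun v => if v == w then x v else 0)).
  by rewrite -big_mkcond big_pred1_eq.
by move=> v _; case: (eqVneq (x v) 0) => [->|/h_id ->]; rewrite ?if_same.
Qed.

Section RealizationMap.
Variables (V W : finType) (P : pred V) (le : rel V) (Q : pred W) (le' : rel W).
Variable h : V -> W.
Hypothesis hP : forall v, P v -> Q (h v).
Hypothesis h_homo : forall u v, P u -> P v -> le u v -> le' (h u) (h v).

Lemma realization_pushforward x :
  realization R P le x -> realization R Q le' (pushforward h x).
Proof.
case=> x_ge0 x_sum1 x_P x_chain; split.
- by move=> w; apply: sumr_ge0 => v _; exact: x_ge0.
- by rewrite sum_pushforward.
- by move=> _ /pushforward_neq0[v <- /x_P/hP].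
- move=> _ _ /pushforward_neq0[u <- xu] /pushforward_neq0[v <- xv].
  by case/orP: (x_chain _ _ xu xv) => le_uv; apply/orP; [left|right];
    apply: h_homo => //; exact: x_P.
Qed.

Definition realization_map (x : set_type (realization R P le)) :
    set_type (realization R Q le') :=
  exist _ (pushforward h (set_val x)) (mem_set (realization_pushforward (set_valP x))).

Lemma continuous_realization_map : continuous realization_map.
Proof.
apply: continuous_ptws_subspace => w; apply: continuous_sumr => v.
exact: continuous_ptws_subspace_coord.
Qed.

End RealizationMap.
End Pushforward.

Lemma homotopic_refl (R : realType) (X Y : topologicalType) (f : X -> Y) :
  continuous f -> homotopic R f f.
Proof.
move=> f_cont; exists (f \o snd); split => //.
by move=> p; apply: continuous_comp; [exact: cvg_snd | exact: f_cont].
Qed.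

Lemma eq_homotopic (R : realType) (X Y : topologicalType) (f1 f2 g1 g2 : X -> Y) :
  f1 =1 f2 -> g1 =1 g2 -> homotopic R f1 g1 -> homotopic R f2 g2.
Proof.
move=> f12 g12 [H [H_cont H0 H1]]; exists H; split=> // t x.
- by rewrite -f12; exact: H0.
- by rewrite -g12; exact: H1.
Qed.

Lemma ler_sum_subpred (R : numDomainType) (I : finType) (P Q : pred I) (F : I -> R) :
  (forall i, 0 <= F i) -> (forall i, P i -> Q i) -> \sum_(i | P i) F i <= \sum_(i | Q i) F i.
Proof.
move=> F_ge0 PQ; rewrite [leLHS]big_mkcond [leRHS]big_mkcond /=.
by apply: ler_sum => i _; case: (boolP (P i)) => [Pi | _]; [by rewrite (PQ i Pi) | by case: (Q i)].
Qed.

Section Sweep.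
Variables (R : realType) (d : Order.disp_t) (V : finPOrderType d).
Implicit Types (s : R) (x : V -> R).

Definition mass_below x v := \sum_(u | u < v) x u.

(* The part of the weight x within the first s units of mass, counted upwards
   along the chain supporting x. *)
Definition lower_part s x v := Num.min (x v) (Num.max 0 (s - mass_below x v)).

Section NonnegativeWeights.
Variable x : V -> R.
Hypothesis x_ge0 : forall v, 0 <= x v.

Lemma mass_below_ge0 v : 0 <= mass_below x v.
Proof. by apply: sumr_ge0 => u _; exact: x_ge0. Qed.

Lemma mass_below_addE v : mass_below x v + x v = \sum_(u | u <= v) x u.
Proof.
rewrite [RHS](bigD1 v) //= addrC; congr (_ + _); apply: eq_bigl => u.
by rewrite lt_neqAle andbC.
Qed.

Lemma mass_below_lt u v : u < v -> mass_below x u + x u <= mass_below x v.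
Proof. by move=> lt_uv; rewrite mass_below_addE ler_sum_subpred // => w /le_lt_trans; apply. Qed.

Variable s : R.

Lemma lower_part_ge0 v : 0 <= lower_part s x v.
Proof. by rewrite /lower_part le_min x_ge0 le_max lexx. Qed.

Lemma lower_part_le v : lower_part s x v <= x v.
Proof. by rewrite /lower_part ge_min lexx. Qed.

Lemma lower_part_neq0 v : lower_part s x v != 0 -> mass_below x v < s.
Proof.
apply: contraNT; rewrite -leNgt => le_s_mass.
by rewrite /lower_part (max_l (_ : s - _ <= 0)) ?subr_le0 // min_r.
Qed.

Lemma lower_part_lt v : lower_part s x v < x v -> s < mass_below x v + x v.
Proof.
apply: contraTT; rewrite -!leNgt => le_mass_s.
by rewrite /lower_part max_r ?min_l //; have := x_ge0 v; lra.
Qed.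

Lemma lower_part_neq0_supp v : lower_part s x v != 0 -> x v != 0.
Proof. by apply: contraNN => /eqP xv0; rewrite eq_le lower_part_ge0 -xv0 lower_part_le. Qed.

Lemma lower_part_lt_supp v : lower_part s x v < x v -> x v != 0.
Proof. by move=> lt_lower; rewrite gt_eqF // (le_lt_trans (lower_part_ge0 v)). Qed.

End NonnegativeWeights.

Lemma lower_part0 x : (forall v, 0 <= x v) -> lower_part 0 x =1 fun=> 0.
Proof.
move=> x_ge0 v; rewrite /lower_part max_l ?min_r ?x_ge0 //.
by rewrite sub0r oppr_le0 mass_below_ge0.
Qed.

Lemma lower_part_total s x : (forall v, 0 <= x v) -> \sum_v x v <= s ->
  lower_part s x =1 x.
Proof.
move=> x_ge0 le_sum_s v; have le_mass_s : mass_below x v + x v <= s.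
  apply: le_trans le_sum_s.
  by rewrite mass_below_addE // [leRHS](bigID (fun u => u <= v)) /= lerDl sumr_ge0.
have xv_ge0 := x_ge0 v; rewrite /lower_part max_r ?min_l //; lra.
Qed.

Lemma lower_part_sep s x : (forall v, 0 <= x v) ->
    (forall u v, x u != 0 -> x v != 0 -> (u <= v) || (v <= u)) ->
  forall u v, lower_part s x u != 0 -> lower_part s x v < x v -> u <= v.
Proof.
move=> x_ge0 x_chain u v lower_u lower_v.
have [//|le_vu] := orP (x_chain u v (lower_part_neq0_supp x_ge0 lower_u)
                                    (lower_part_lt_supp x_ge0 lower_v)).
have [-> //|ne_vu] := eqVneq v u.
have lt_vu : (v < u)%O by rewrite lt_neqAle ne_vu.
exfalso; have := mass_below_lt x_ge0 lt_vu; have := lower_part_neq0 x_ge0 lower_u.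
by have := lower_part_lt x_ge0 lower_v; lra.
Qed.

End Sweep.

Section ComparableMapsHomotopic.
Variables (R : realType) (d d' : Order.disp_t).
Variables (V : finPOrderType d) (W : finPOrderType d').
Variables (P : pred V) (Q : pred W) (f g : V -> W).
Hypotheses (fP : forall v, P v -> Q (f v)) (gP : forall v, P v -> Q (g v)).
Hypothesis f_homo : forall u v, P u -> P v -> u <= v -> f u <= f v.
Hypothesis g_homo : forall u v, P u -> P v -> u <= v -> g u <= g v.
Hypothesis f_le_g : forall v, P v -> f v <= g v.

Definition sweep (s : R) (x : V -> R) : W -> R := fun w =>
  pushforward f (lower_part s x) w + pushforward g (fun v => x v - lower_part s x v) w.

Lemma sweep_neq0 s x w : (forall v, 0 <= x v) -> sweep s x w != 0 ->
  (exists2 v, f v = w & lower_part s x v != 0) \/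
  (exists2 v, g v = w & lower_part s x v < x v).
Proof.
move=> x_ge0; rewrite /sweep.
have [-> | /pushforward_neq0 ?] := eqVneq (pushforward f (lower_part s x) w) 0; last by left.
rewrite add0r => /pushforward_neq0[v gv]; rewrite subr_eq0 eq_sym => ne_lower.
by right; exists v; rewrite // lt_neqAle ne_lower lower_part_le.
Qed.

Lemma realization_sweep s x :
  realization R P <=%O x -> realization R Q <=%O (sweep s x).
Proof.
case=> x_ge0 x_sum1 x_P x_chain.
have lower_P v : lower_part s x v != 0 -> P v.
  by move/(lower_part_neq0_supp x_ge0)/x_P.
have upper_P v : lower_part s x v < x v -> P v.
  by move/(lower_part_lt_supp x_ge0)/x_P.
have lower_le_upper u v : lower_part s x u != 0 -> lower_part s x v < x v -> f u <= g v.
  move=> lower_u upper_v; have le_uv := lower_part_sep x_ge0 x_chain lower_u upper_v.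
  exact: le_trans (f_homo (lower_P _ lower_u) (upper_P _ upper_v) le_uv) (f_le_g (upper_P _ upper_v)).
split.
- move=> w; apply: addr_ge0; apply: sumr_ge0 => v _.
    exact: lower_part_ge0.
  by rewrite subr_ge0 lower_part_le.
- rewrite big_split /= !sum_pushforward -big_split /= -x_sum1.
  by apply: eq_bigr => v _; rewrite addrC subrK.
- by move=> w /sweep_neq0-/(_ x_ge0)[][v <-]; [move/lower_P/fP | move/upper_P/gP].
- move=> w1 w2 /sweep_neq0-/(_ x_ge0)[][v1 <- h1] /sweep_neq0-/(_ x_ge0)[][v2 <- h2].
  + case/orP: (x_chain v1 v2 (lower_part_neq0_supp x_ge0 h1) (lower_part_neq0_supp x_ge0 h2));
      move=> le_v; apply/orP; [left|right]; apply: f_homo => //; exact: lower_P.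
  + by rewrite lower_le_upper.
  + by rewrite lower_le_upper ?orbT.
  + case/orP: (x_chain v1 v2 (lower_part_lt_supp x_ge0 h1) (lower_part_lt_supp x_ge0 h2));
      move=> le_v; apply/orP; [left|right]; apply: g_homo => //; exact: upper_P.
Qed.

Lemma sweep_at0 x : (forall v, 0 <= x v) -> sweep 0 x = pushforward g x.
Proof.
move=> x_ge0; apply/funext => w; rewrite /sweep /pushforward big1 ?add0r.
  by apply: eq_bigr => v _; rewrite lower_part0 // subr0.
by move=> v _; rewrite lower_part0.
Qed.

Lemma sweep_at1 x : realization R P <=%O x -> sweep 1 x = pushforward f x.
Proof.
case=> x_ge0 x_sum1 _ _; have lowerE : lower_part 1 x =1 x by apply: lower_part_total; rewrite ?x_sum1.
apply/funext => w; rewrite /sweep /pushforward [X in _ + X]big1 ?addr0.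
  by apply: eq_bigr => v _; rewrite lowerE.
by move=> v _; rewrite lowerE subrr.
Qed.

Section Continuity.
Variables (T : topologicalType) (s : T -> R) (x : T -> V -> R).
Hypotheses (s_cont : continuous s) (x_cont : forall v, continuous (fun t => x t v)).

Lemma continuous_lower_part v : continuous (fun t => lower_part (s t) (x t) v).
Proof.
move=> t; apply: (@continuous_min R T (fun t => x t v)); first exact: x_cont.
apply: (@continuous_max R T (fun=> 0)); first exact: cvg_cst.
by apply: cvgB; [exact: s_cont | exact: continuous_sumr].
Qed.

Lemma continuous_sweep w : continuous (fun t => sweep (s t) (x t) w).
Proof.
move=> t; apply: cvgD; apply: continuous_sumr => v; first exact: continuous_lower_part.
by move=> u; apply: cvgB; [exact: x_cont | exact: continuous_lower_part].
Qed.

End Continuity.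

Lemma realization_maps_homotopic :
  homotopic R (realization_map (R := R) fP f_homo) (realization_map (R := R) gP g_homo).
Proof.
pose H (p : set_type (@unit_interval R) * set_type (realization R P <=%O)) :
    set_type (realization R Q <=%O) := exist _ (sweep (1 - set_val p.1) (set_val p.2))
    (mem_set (realization_sweep _ (set_valP p.2))).
exists H; split.
- apply: continuous_ptws_subspace => w; apply: continuous_sweep => [p|v p].
    apply: cvgB; first exact: cvg_cst.
    apply: (@continuous_comp _ _ _ fst (@set_val _ (@unit_interval R))).
      exact: cvg_fst.
    exact: initial_continuous.
  apply: (@continuous_comp _ _ _ snd (fun a : set_type (realization R P <=%O) => set_val a v)).
    exact: cvg_snd.
  exact: continuous_ptws_subspace_coord.
- move=> t x t0; apply: val_inj; rewrite /= t0 subr0 sweep_at1 //; exact: set_valP.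
- by move=> t x t1; apply: val_inj; rewrite /= t1 subrr sweep_at0 //; case: (set_valP x).
Qed.

End ComparableMapsHomotopic.

Section CongruenceQuotient.
Variables (R : realType) (disp : Order.disp_t) (L : finTBLatticeType disp) (Th : rel L).
Hypothesis ThC : lattice_congruence Th.
Hypothesis atom_not_cong_bot : forall a : L, is_atom a -> ~ Th a \bot.
Hypothesis coatom_not_cong_top : forall a : L, is_coatom a -> ~ Th a \top.

Local Notation proper x := ((x != \bot) && (x != \top)).
Local Notation proper_class S :=
  [&& is_cong_class Th S, S%SET != cong_class Th \bot & S%SET != cong_class Th \top].

Lemma cong_class_mem S x : is_cong_class Th S -> x \in S -> S = cong_class Th x.
Proof. by case/existsP=> y /eqP-> /[!inE] /(cong_classP ThC). Qed.

Lemma cong_class_proper x : proper_class (cong_class Th x) = proper x.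
Proof.
rewrite cong_class_eq_bot ?cong_class_eq_top //.
by have -> : is_cong_class Th (cong_class Th x) by apply/existsP; exists x.
Qed.

Lemma cong_min_proper x : proper (cong_min Th x) = proper x.
Proof. by rewrite cong_min_eq_bot ?cong_min_eq_top. Qed.

Lemma cong_class_homo : {homo cong_class Th : x y / x <= y >-> quot_le x y}.
Proof.
move=> x y le_xy; apply/existsP; exists x; rewrite inE cong_refl //=.
by apply/existsP; exists y; rewrite inE cong_refl.
Qed.

Lemma meet_class_proper S : proper_class S -> proper (\meet_(x in S) x).
Proof.
case/and3P=> /existsP[x /eqP->] ne_bot ne_top.
by rewrite cong_min_proper -cong_class_proper; apply/and3P; split=> //; apply/existsP; exists x.
Qed.

Lemma meet_class_homo S T : proper_class S -> proper_class T -> quot_le S T ->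
  \meet_(x in S) x <= \meet_(x in T) x.
Proof.
case/andP=> S_class _ /andP[T_class _] /existsP[x /andP[xS /existsP[y /andP[yT le_xy]]]].
by rewrite (cong_class_mem S_class xS) (cong_class_mem T_class yT) cong_min_homo.
Qed.

Definition to_quotient : proper_part_space R L -> quotient_proper_part_space R Th :=
  realization_map (fun x => etrans (cong_class_proper x))
    (fun x y _ _ (le_xy : x <= y) => cong_class_homo le_xy).

Definition from_quotient : quotient_proper_part_space R Th -> proper_part_space R L :=
  realization_map meet_class_proper meet_class_homo.

Lemma to_from_quotient : to_quotient \o from_quotient =1 idfun.
Proof.
move=> y; apply: val_inj; rewrite /= pushforward_comp pushforward_id_on // => S.
case: (set_valP y) => _ _ y_proper _ /y_proper/and3P[/existsP[x /eqP->] _ _] /=.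
by apply/(cong_classP ThC); rewrite cong_sym ?cong_cong_min.
Qed.

Lemma from_to_quotient_homotopic : homotopic R (from_quotient \o to_quotient) idfun.
Proof.
have := realization_maps_homotopic R (P := fun x => proper x) (Q := fun x => proper x)
  (f := cong_min Th) (g := id)
  (fun x => etrans (cong_min_proper x)) (fun x (px : proper x) => px)
  (fun x y _ _ => @cong_min_homo _ _ _ ThC x y) (fun x y _ _ le_xy => le_xy)
  (fun x _ => cong_min_le ThC x).
apply: eq_homotopic => x; apply: val_inj => /=; first by rewrite pushforward_comp.
by rewrite pushforward_id_on.
Qed.

Lemma to_from_quotient_homotopic : homotopic R (to_quotient \o from_quotient) idfun.
Proof.
apply: eq_homotopic (homotopic_refl R (f := idfun) (fun=> cvg_id)) => // y.
by rewrite to_from_quotient.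
Qed.

End CongruenceQuotient.

Unset Implicit Arguments.

Theorem corollary2p4 (R : realType) (disp : Order.disp_t)
  (L : finTBLatticeType disp) (Th : rel L) :
  lattice_congruence Th ->
  (forall a : L, is_atom a -> ~ Th a \bot) ->
  (forall a : L, is_coatom a -> ~ Th a \top) ->
  homotopy_equivalent R (proper_part_space R L)
                        (quotient_proper_part_space R Th).
Proof.
move=> ThC atom_not_cong_bot coatom_not_cong_top.
exists (to_quotient ThC atom_not_cong_bot coatom_not_cong_top).
exists (from_quotient ThC atom_not_cong_bot coatom_not_cong_top).
split; try exact: continuous_realization_map.
- exact: from_to_quotient_homotopic.
- exact: to_from_quotient_homotopic.
Qed.
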